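(* For $k\in\mathbb{N}$ let $D(k)=\dfrac{1}{4}\cdot\dfrac{3^{2k+2}-9-40k-32k^{2}}{(2k+2)!}$. (i) For every $x\in(0,\pi/2)$ and every $n\in\mathbb{N}$, $$2+\frac{1}{\cos x}\sum_{k=2}^{2n+1}(-1)^{k}D(k)\,x^{2k}<\Big(\frac{\sin x}{x}\Big)^{2}+\frac{\tan x}{x}<2+\frac{1}{\cos x}\sum_{k=2}^{2n}(-1)^{k}D(k)\,x^{2k}.$$ (ii) For every $x\in(0,\pi/2)$ and every integer $m\ge 2$, $$\Big|\Big(\frac{\sin x}{x}\Big)^{2}+\frac{\tan x}{x}-\Big(2+\frac{1}{\cos x}\sum_{k=2}^{m}(-1)^{k}D(k)\,x^{2k}\Big)\Big|<D(m+1)\,\frac{x^{2m+2}}{\cos x}.$$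
   Context: $\mathbb{N}=\{1,2,3,\dots\}$. *)

From Stdlib Require Import Arith Reals Lra Lia.
Open Scope R_scope.

Definition D (k : nat) : R :=
  / 4 * ((3 ^ (2 * k + 2) - 9 - 40 * INR k - 32 * (INR k) ^ 2)
         / INR (fact (2 * k + 2))).

Definition term (x : R) (k : nat) : R := (-1) ^ k * D k * x ^ (2 * k).

Fixpoint Psum (x : R) (N : nat) : R :=
  match N with
  | O => 0
  | S N' => Psum x N' + (if (2 <=? N)%nat then term x N else 0)
  end.

Definition F (x : R) : R := (sin x / x) ^ 2 + tan x / x.

Definition approx (x : R) (N : nat) : R := 2 + / cos x * Psum x N.

(* Since sin² x cos x = (cos x - cos 3x) / 4,
     cos x (F x - 2) = (cos x - cos 3x) / (4 x²) + sin x / x - 2 cos x,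
   and the Taylor series of the right-hand side is the alternating series
   Σ (-1)^k D(k) x^(2k), with D(0) = D(1) = 0.  The numerator N(k) of D(k)
   satisfies N(k+1) = 9 N(k) + 256 k (k+1) <= 12 N(k) for k >= 2, so that
   4 D(k+1) < D(k); as x < π/2 < 2, the moduli D(k) x^(2k), k >= 2, strictly
   decrease.  The Leibniz bounds for this series, divided by cos x > 0, are the
   two claims. *)

From Stdlib Require Import Arith Reals Lra Lia.
From Coquelicot Require Import Coquelicot.
Open Scope R_scope.

Lemma tg_alt_even (a : nat -> R) (p : nat) : tg_alt a (2 * p)%nat = a (2 * p)%nat.
Proof. unfold tg_alt. rewrite pow_1_even. ring. Qed.

Lemma tg_alt_odd (a : nat -> R) (p : nat) : tg_alt a (S (2 * p)) = - a (S (2 * p)).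
Proof. unfold tg_alt. rewrite pow_1_odd. ring. Qed.

Section StrictAlternatingSeries.

Variables (a : nat -> R) (l : R).
Hypothesis a_decr : forall n, a (S n) < a n.
Hypothesis a_sum : Un_cv (sum_f_R0 (tg_alt a)) l.

Lemma alternated_series_cv0 : Un_cv a 0.
Proof.
  apply is_lim_seq_Reals, is_lim_seq_abs_0.
  assert (Hlim : is_lim_seq (tg_alt a) 0).
  { apply ex_series_lim_0. exists l. now apply is_series_Reals. }
  apply is_lim_seq_abs in Hlim. simpl in Hlim. rewrite Rabs_R0 in Hlim.
  refine (is_lim_seq_ext _ _ _ _ Hlim). intro n.
  unfold tg_alt. rewrite Rabs_mult, pow_1_abs, Rmult_1_l. reflexivity.
Qed.

Lemma alternated_series_strict_ineq (p : nat) :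
  sum_f_R0 (tg_alt a) (S (2 * p)) < l < sum_f_R0 (tg_alt a) (2 * p).
Proof.
  (* Leibniz's non-strict bounds at index p + 1 sharpen those at p by the
     positive amounts a (2p+1) - a (2p+2) and a (2p+2) - a (2p+3). *)
  assert (a_dec : Un_decreasing a) by (intro n; left; apply a_decr).
  destruct (alternated_series_ineq a l (S p) a_dec alternated_series_cv0 a_sum)
    as [Hlow Hup].
  replace (2 * S p)%nat with (S (S (2 * p))) in Hlow, Hup by lia.
  rewrite 3!tech5 in Hlow. rewrite 2!tech5 in Hup. rewrite tech5.
  replace (S (S (2 * p))) with (2 * S p)%nat in Hlow, Hup by lia.
  rewrite (tg_alt_odd a p), (tg_alt_odd a (S p)), tg_alt_even in Hlow.
  rewrite tg_alt_odd, tg_alt_even in Hup. rewrite tg_alt_odd.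
  pose proof (a_decr (S (2 * p))). pose proof (a_decr (2 * S p)).
  replace (S (S (2 * p))) with (2 * S p)%nat in * by lia.
  lra.
Qed.

Lemma alternated_series_remainder (n : nat) :
  Rabs (l - sum_f_R0 (tg_alt a) n) < a (S n).
Proof.
  destruct (Nat.Even_or_Odd n) as [[p ->] | [p ->]].
  - destruct (alternated_series_strict_ineq p) as [Hlow Hup].
    rewrite tech5, tg_alt_odd in Hlow.
    apply Rabs_def1; lra.
  - destruct (alternated_series_strict_ineq p) as [Hlow _].
    destruct (alternated_series_strict_ineq (S p)) as [_ Hup].
    replace (2 * S p)%nat with (S (2 * p + 1)) in Hup by lia.
    rewrite tech5 in Hup.
    replace (S (2 * p + 1)) with (2 * S p)%nat in * by lia.
    rewrite tg_alt_even in Hup.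
    replace (S (2 * p)) with (2 * p + 1)%nat in Hlow by lia.
    apply Rabs_def1; lra.
Qed.

End StrictAlternatingSeries.

Definition D_num (k : nat) : R := 3 ^ (2 * k + 2) - 9 - 40 * INR k - 32 * INR k ^ 2.

Lemma D_num_succ (k : nat) : D_num (S k) = 9 * D_num k + 256 * INR k * (INR k + 1).
Proof.
  unfold D_num. replace (2 * S k + 2)%nat with (S (S (2 * k + 2))) by lia.
  rewrite S_INR. simpl pow. ring.
Qed.

Lemma D_num_lower (k : nat) : (2 <= k)%nat -> 256 * INR k * (INR k + 1) <= 3 * D_num k.
Proof.
  intro Hk. induction Hk as [|k Hk IH].
  - unfold D_num. simpl. lra.
  - rewrite D_num_succ, S_INR.
    assert (2 <= INR k) by (apply (le_INR 2); exact Hk).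
    nra.
Qed.

Lemma D_num_pos (k : nat) : (2 <= k)%nat -> 0 < D_num k.
Proof.
  intro Hk. pose proof (D_num_lower k Hk). pose proof (le_INR 2 k Hk).
  change (INR 2) with 2 in *. nra.
Qed.

Lemma D_num_succ_lt (k : nat) :
  (2 <= k)%nat -> 4 * D_num (S k) < (2 * INR k + 3) * (2 * INR k + 4) * D_num k.
Proof.
  intro Hk. pose proof (D_num_lower k Hk). pose proof (D_num_pos k Hk).
  pose proof (le_INR 2 k Hk). change (INR 2) with 2 in *.
  assert (56 <= (2 * INR k + 3) * (2 * INR k + 4)) by nra.
  rewrite D_num_succ. nra.
Qed.

Lemma D_num_eq (k : nat) : 4 * INR (fact (2 * k + 2)) * D k = D_num k.
Proof. unfold D, D_num. field. apply INR_fact_neq_0. Qed.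

Lemma D_pos (k : nat) : (2 <= k)%nat -> 0 < D k.
Proof.
  intro Hk. pose proof (D_num_pos k Hk). pose proof (D_num_eq k).
  pose proof (lt_0_INR _ (lt_O_fact (2 * k + 2))). nra.
Qed.

Lemma INR_fact_succ_2 (k : nat) :
  INR (fact (2 * S k + 2)) = (2 * INR k + 3) * (2 * INR k + 4) * INR (fact (2 * k + 2)).
Proof.
  replace (2 * S k + 2)%nat with (S (S (2 * k + 2))) by lia.
  rewrite 2!fact_simpl, 2!mult_INR, 2!S_INR, plus_INR, mult_INR.
  change (INR 2) with 2. ring.
Qed.

Lemma D_succ_lt (k : nat) : (2 <= k)%nat -> 4 * D (S k) < D k.
Proof.
  intro Hk. pose proof (D_num_succ_lt k Hk) as Hnum.
  rewrite <- D_num_eq, <- (D_num_eq k), INR_fact_succ_2 in Hnum.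
  pose proof (lt_0_INR _ (lt_O_fact (2 * k + 2))). pose proof (pos_INR k).
  set (f := INR (fact (2 * k + 2))) in *.
  set (B := (2 * INR k + 3) * (2 * INR k + 4)) in *.
  assert (0 < 4 * B * f) by (unfold B; nra).
  apply Rmult_lt_reg_l with (4 * B * f); nra.
Qed.

Lemma D_0 : D 0 = 0.
Proof. unfold D. simpl. field. Qed.

Lemma D_1 : D 1 = 0.
Proof. unfold D. simpl. field. Qed.

Lemma is_series_cos (y : R) : is_series (fun j => cos_n j * (y ^ 2) ^ j) (cos y).
Proof.
  unfold cos. destruct (exist_cos (Rsqr y)) as [l Hl].
  apply is_series_Reals. rewrite Rsqr_pow2 in Hl. exact Hl.
Qed.

Lemma is_series_sin_div (y : R) :
  y <> 0 -> is_series (fun j => sin_n j * (y ^ 2) ^ j) (sin y / y).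
Proof.
  intro Hy. unfold sin. destruct (exist_sin (Rsqr y)) as [l Hl].
  replace (y * l / y) with l by (field; exact Hy).
  apply is_series_Reals. rewrite Rsqr_pow2 in Hl. exact Hl.
Qed.

Lemma term_eq_trig_coef (x : R) (k : nat) : x <> 0 ->
  term x k = (cos_n (S k) * (x ^ 2) ^ S k - cos_n (S k) * ((3 * x) ^ 2) ^ S k) / (4 * x ^ 2)
             + sin_n k * (x ^ 2) ^ k - 2 * (cos_n k * (x ^ 2) ^ k).
Proof.
  intro Hx.
  assert (Hfact : INR (fact (2 * k)) <> 0) by (apply not_0_INR, fact_neq_0).
  assert (H9 : 3 ^ (2 * k + 2) = 9 ^ k * 9)
    by (rewrite pow_add, pow_mult; replace (3 ^ 2) with 9 by ring; ring).
  assert (H9x : ((3 * x) ^ 2) ^ S k = 9 ^ k * 9 * (x ^ 2) ^ S k)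
    by (rewrite 2!Rpow_mult_distr; replace (3 ^ 2) with 9 by ring; simpl; ring).
  unfold term, D, cos_n, sin_n. rewrite H9, H9x, <- !pow_mult.
  replace (2 * S k)%nat with (S (S (2 * k))) by lia.
  replace (2 * k + 1)%nat with (S (2 * k)) by lia.
  replace (2 * k + 2)%nat with (S (S (2 * k))) by lia.
  rewrite !fact_simpl, !mult_INR, !S_INR, mult_INR, <- !tech_pow_Rmult.
  replace (INR 2) with 2 by reflexivity.
  field. pose proof (pos_INR k). repeat split; try lra; auto.
Qed.

Lemma is_series_term_trig (x : R) : x <> 0 ->
  is_series (term x) ((cos x - cos (3 * x)) / (4 * x ^ 2) + sin x / x - 2 * cos x).
Proof.
  intro Hx.
  set (b j := cos_n j * (x ^ 2) ^ j - cos_n j * ((3 * x) ^ 2) ^ j).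
  assert (Hb : is_series b (cos x - cos (3 * x)))
    by exact (is_series_minus _ _ _ _ (is_series_cos x) (is_series_cos (3 * x))).
  assert (Hb1 : is_series (fun k => b (S k)) (cos x - cos (3 * x))).
  { apply is_series_incr_1.
    assert (Hb0 : b 0%nat = 0) by (unfold b; ring).
    rewrite Hb0. change (plus ?l 0) with (l + 0). rewrite Rplus_0_r. exact Hb. }
  pose proof (is_series_minus _ _ _ _
    (is_series_plus _ _ _ _ (is_series_scal_r (/ (4 * x ^ 2)) _ _ Hb1) (is_series_sin_div x Hx))
    (is_series_scal 2 _ _ (is_series_cos x))) as Hsum.
  refine (is_series_ext _ _ _ _ Hsum). intro k.
  rewrite (term_eq_trig_coef x k Hx). reflexivity.
Qed.

Lemma cos_triple (x : R) : cos (3 * x) = cos x - 4 * cos x * sin x ^ 2.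
Proof.
  replace (3 * x) with (2 * x + x) by ring.
  rewrite cos_plus, sin_2a, cos_2a_sin. unfold Rsqr. ring.
Qed.

Lemma cos_mul_F_sub_2 (x : R) : x <> 0 -> cos x <> 0 ->
  cos x * (F x - 2) = (cos x - cos (3 * x)) / (4 * x ^ 2) + sin x / x - 2 * cos x.
Proof.
  intros Hx Hc. unfold F, tan. rewrite cos_triple. field. auto.
Qed.

Lemma is_series_term (x : R) : x <> 0 -> cos x <> 0 ->
  is_series (term x) (cos x * (F x - 2)).
Proof.
  intros Hx Hc. rewrite cos_mul_F_sub_2 by assumption. exact (is_series_term_trig x Hx).
Qed.

Definition dterm (x : R) (k : nat) : R := D (k + 2) * x ^ (2 * (k + 2)).

Lemma term_add_2 (x : R) (k : nat) : term x (k + 2) = tg_alt (dterm x) k.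
Proof. unfold term, tg_alt, dterm. rewrite pow_add. simpl. ring. Qed.

Lemma Psum_succ (x : R) (N : nat) : (1 <= N)%nat -> Psum x (S N) = Psum x N + term x (S N).
Proof. intro HN. destruct N as [|N]; [lia | reflexivity]. Qed.

Lemma Psum_tg_alt (x : R) (N : nat) : Psum x (N + 2) = sum_f_R0 (tg_alt (dterm x)) N.
Proof.
  induction N as [|N IH].
  - simpl. rewrite <- term_add_2. simpl. ring.
  - replace (S N + 2)%nat with (S (N + 2)) by lia.
    rewrite Psum_succ, IH, tech5, <- term_add_2 by lia.
    replace (S (N + 2)) with (S N + 2)%nat by lia. reflexivity.
Qed.

Lemma dterm_decr (x : R) (n : nat) : 0 < x < 2 -> dterm x (S n) < dterm x n.
Proof.
  intro Hx. unfold dterm.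
  replace (S n + 2)%nat with (S (n + 2)) by lia.
  replace (2 * S (n + 2))%nat with (2 * (n + 2) + 2)%nat by lia.
  rewrite pow_add, (Rmult_comm (x ^ _)), <- Rmult_assoc.
  apply Rmult_lt_compat_r; [apply pow_lt; lra |].
  pose proof (D_succ_lt (n + 2) ltac:(lia)). pose proof (D_pos (S (n + 2)) ltac:(lia)).
  assert (x ^ 2 < 4) by (simpl; nra).
  nra.
Qed.

Lemma tg_alt_dterm_cv (x : R) : x <> 0 -> cos x <> 0 ->
  Un_cv (sum_f_R0 (tg_alt (dterm x))) (cos x * (F x - 2)).
Proof.
  intros Hx Hc. apply is_series_Reals.
  refine (is_series_ext _ _ _ _ (is_series_incr_n (term x) 2 _ ltac:(lia) _)).
  - intro k. rewrite Nat.add_comm. apply term_add_2.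
  - match goal with |- is_series _ ?l => replace l with (cos x * (F x - 2)) end.
    + exact (is_series_term x Hx Hc).
    + simpl Nat.pred. rewrite sum_Sn, sum_O. unfold term, plus. rewrite D_0, D_1. simpl. ring.
Qed.

Lemma F_sub_approx (x : R) (N : nat) : cos x <> 0 ->
  cos x * (F x - approx x (N + 2)) = cos x * (F x - 2) - sum_f_R0 (tg_alt (dterm x)) N.
Proof. intro Hc. unfold approx. rewrite Psum_tg_alt. field. exact Hc. Qed.

Lemma dterm_alternated_series (x : R) : 0 < x < PI / 2 ->
  (forall n, dterm x (S n) < dterm x n) /\
  Un_cv (sum_f_R0 (tg_alt (dterm x))) (cos x * (F x - 2)).
Proof.
  intro Hx. pose proof PI_4. pose proof PI_RGT_0.
  assert (Hc : 0 < cos x) by (apply cos_gt_0; lra).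
  split.
  - intro n. apply dterm_decr. lra.
  - apply tg_alt_dterm_cv; lra.
Qed.

Theorem theorem4 :
  (forall (x : R) (n : nat), 0 < x < PI / 2 -> (1 <= n)%nat ->
     approx x (2 * n + 1) < F x < approx x (2 * n)) /\
  (forall (x : R) (m : nat), 0 < x < PI / 2 -> (2 <= m)%nat ->
     Rabs (F x - approx x m) < D (m + 1) * x ^ (2 * m + 2) / cos x).
Proof.
  assert (Hcos : forall x, 0 < x < PI / 2 -> 0 < cos x)
    by (intros x Hx; apply cos_gt_0; pose proof PI_RGT_0; lra).
  split.
  - intros x n Hx Hn. pose proof (Hcos x Hx) as Hc.
    destruct (dterm_alternated_series x Hx) as [Hdecr Hcv].
    destruct n as [|p]; [lia |].
    destruct (alternated_series_strict_ineq _ _ Hdecr Hcv p) as [Hlow Hup].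
    pose proof (F_sub_approx x (S (2 * p)) ltac:(lra)) as Eodd.
    pose proof (F_sub_approx x (2 * p) ltac:(lra)) as Eeven.
    replace (S (2 * p) + 2)%nat with (2 * S p + 1)%nat in Eodd by lia.
    replace (2 * p + 2)%nat with (2 * S p)%nat in Eeven by lia.
    split; nra.
  - intros x m Hx Hm. pose proof (Hcos x Hx) as Hc.
    destruct (dterm_alternated_series x Hx) as [Hdecr Hcv].
    pose proof (alternated_series_remainder _ _ Hdecr Hcv (m - 2)) as Hrem.
    rewrite <- F_sub_approx, Rabs_mult, Rabs_pos_eq in Hrem by lra.
    unfold dterm in Hrem.
    replace (m - 2 + 2)%nat with m in Hrem by lia.
    replace (S (m - 2) + 2)%nat with (m + 1)%nat in Hrem by lia.
    replace (2 * (m + 1))%nat with (2 * m + 2)%nat in Hrem by lia.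
    apply Rmult_lt_reg_l with (cos x); [exact Hc |].
    replace (cos x * (D (m + 1) * x ^ (2 * m + 2) / cos x))
      with (D (m + 1) * x ^ (2 * m + 2)) by (field; lra).
    exact Hrem.
Qed.
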